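(* Let $0\le k\le n$, let $\bar g\in G_k$ have type $\boldsymbol\lambda\in\mathcal{P}(\Phi)$, and let $g=\begin{bmatrix}\bar g&0\\0&I_{n-k}\end{bmatrix}\in G_n$. Suppose all parts of the partition $\boldsymbol\lambda^e=\boldsymbol\lambda(t-1)$ are strictly bigger than $1$. Then an $n\times n$ matrix $\begin{bmatrix}A&B\\C&D\end{bmatrix}$ over $\mathbb F_q$, written in $(k\,|\,n-k)$-block form, which commutes with $g$ is invertible if and only if both $A$ and $D$ are invertible.
   Context: $q$ is a prime power, $G_n=GL_n(\mathbb F_q)$. $\Phi$ is the set of monic irreducible polynomials in $\mathbb F_q[t]$ other than $t$; $\mathcal{P}(\Phi)$ is the set of finitely supported maps from $\Phi$ to partitions. The type of $\bar g\in G_k$ is the unique $\boldsymbol\lambda\in\mathcal{P}(\Phi)$ such that $\mathbb F_q^k$, viewed as an $\mathbb F_q[t]$-module with $t$ acting by $\bar g$, is isomorphic to $\bigoplus_{f,i}\mathbb F_q[t]/(f^{\boldsymbol\lambda_i(f)})$, where $\boldsymbol\lambda(f)=(\boldsymbol\lambda_1(f),\boldsymbol\lambda_2(f),\dots)$. *)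

From HB Require Import structures.
From mathcomp Require Import all_boot all_order all_algebra all_field.
Set Implicit Arguments. Unset Strict Implicit. Unset Printing Implicit Defensive.
Import Order.TTheory GRing.Theory Num.Theory.
Local Open Scope ring_scope.

Section Types.
Variable F : finFieldType.

Definition in_Phi (f : {poly F}) : Prop :=
  [/\ f \is monic, irreducible_poly f & f != 'X].

Definition is_partition (s : seq nat) : bool :=
  sorted geq s && all (fun m => 0 < m)%N s.

Definition type_blocks (lam : {poly F} -> seq nat) (s : seq {poly F})
  : seq {poly F} :=
  flatten [seq [seq f ^+ m | m <- lam f] | f <- s].

(* the matrix of t acting (on row vectors) on the F[t]-module
   (+)_j F[t]/(ps_j), in the bases 1, t, ..., t^(deg ps_j - 1) *)
Definition blocks_mx (ps : seq {poly F}) :=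
  \mxdiag_(i < size ps) companionmx (polyseq ps`_i).

(* gbar (acting on row vectors of F^k) has type lam: lam is a finitely
   supported map Phi -> partitions, and F^k as an F[t]-module (t acting
   by gbar) is isomorphic to (+)_{f,i} F[t]/(f^(lam_i f)). *)
Definition has_type (k : nat) (gbar : 'M[F]_k) (lam : {poly F} -> seq nat)
  : Prop :=
  [/\ forall f, lam f != [::] -> in_Phi f,
      forall f, is_partition (lam f) &
      exists s : seq {poly F},
        [/\ uniq s, forall f, lam f != [::] -> f \in s &
          exists P : 'M[F]_(\sum_(i < size (type_blocks lam s))
                               (size (polyseq (type_blocks lam s)`_i)).-1, k),
            [/\ row_free P, row_full P &
                blocks_mx (type_blocks lam s) *m P = P *m gbar]]].

End Types.

(* The property of [gbar] that matters is that every row vector it fixes is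
   orthogonal to every column vector it fixes.  This property survives
   similarity and block-diagonal sums, so by the type hypothesis it suffices
   to check it on the companion matrix C of each elementary divisor p = f^m.
   If p(1) <> 0 then 1 is not an eigenvalue of C.  Otherwise f = t - 1 and
   m > 1, so p'(1) = 0 as well; the columns fixed by C are the constant ones,
   and p'(1) = 0 puts the constant column in the image of C - 1, which every
   fixed row annihilates.
   Commuting with diag(gbar, 1) means that gbar fixes the columns of B and the
   rows of C, hence C X = 0 whenever gbar fixes the columns of X.  If M is
   invertible, this applies to the blocks of M^-1 too, and the diagonal blocks
   of M M^-1 = 1 then exhibit inverses of A and D.  Conversely, when A is
   invertible the Schur complement D - C A^-1 B is just D. *)

From mathcomp Require Import all_boot all_order all_algebra all_field.
Import GRing.Theory.
Local Open Scope ring_scope.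
Set Implicit Arguments. Unset Strict Implicit.

Definition fixed_orthogonal (F : fieldType) (N : nat) (M : 'M[F]_N) :=
  forall (w : 'rV_N) (v : 'cV_N), w *m M = w -> M *m v = v -> w *m v = 0.

Section Companion.
Variables (F : fieldType) (p : {poly F}).
Local Notation d := (size p).-1.
Local Notation C := (companionmx p).

Lemma companionmx_mulmx_shift (m : nat) (v : 'M[F]_(d, m)) (i : 'I_d)
    (lt_i1_d : (i.+1 < d)%N) :
  row i (C *m v) = row (Ordinal lt_i1_d) v.
Proof. by rewrite !rowE mulmxA mulmx_delta_companion. Qed.

Lemma companionmx_fixed_col (v : 'cV[F]_d) :
  C *m v = v -> exists c, v = c *: const_mx 1.
Proof.
move=> Cv; have [d0|d_gt0] := posnP d.
  by exists 0; apply/matrixP => i; have := ltn_ord i; rewrite {2}d0.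
pose i0 : 'I_d := Ordinal d_gt0; exists (v i0 0).
have vi n (lt_n_d : (n < d)%N) : v (Ordinal lt_n_d) 0 = v i0 0.
  elim: n lt_n_d => [|n IHn] lt_n_d; first by congr (v _ 0); apply: val_inj.
  have lt_n_d' := ltnW lt_n_d.
  have := companionmx_mulmx_shift v (i:=Ordinal lt_n_d') lt_n_d.
  by rewrite Cv -IHn => /rowP/(_ 0); rewrite !mxE => <-.
apply/matrixP => i j; rewrite (ord1 j) !mxE mulr1.
by rewrite -(vi i (ltn_ord i)); congr (v _ 0); apply: val_inj.
Qed.

Lemma companionmx_mulmx_last (v : 'cV[F]_d) (i : 'I_d) :
  i = d.-1 :> nat -> (C *m v) i 0 = - \sum_(j < d) p`_j * v j 0.
Proof.
move=> last_i; rewrite mxE -sumrN.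
by apply: eq_bigr => j _; rewrite mxE last_i eqxx mulNr.
Qed.

Lemma sum_coef_natmul_monic :
  p \is monic -> \sum_(j < d) p`_j *+ j = p^`().[1] - d%:R.
Proof.
move=> monic_p; have size_p : size p = d.+1.
  by rewrite prednK // size_poly_gt0 monic_neq0.
have deriv1 : p^`().[1] = \sum_(j < d) p`_j.+1 *+ j.+1.
  rewrite (horner_coef_wide 1 (n := d)); last first.
    by rewrite -ltnS -size_p lt_size_deriv ?monic_neq0.
  by apply: eq_bigr => j _; rewrite expr1n mulr1 coef_deriv.
have lead_p : p`_d = 1 by move/monicP: monic_p; rewrite /lead_coef size_p.
have sum_recr : \sum_(j < d.+1) p`_j *+ j = \sum_(j < d) p`_j *+ j + d%:R.
  by rewrite big_ord_recr /= lead_p.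
have sum_recl : \sum_(j < d.+1) p`_j *+ j = p^`().[1].
  by rewrite big_ord_recl mulr0n add0r deriv1.
by rewrite -sum_recl sum_recr addrK.
Qed.

Lemma companionmx_subr1_ramp :
  p \is monic -> p^`().[1] = 0 -> (C - 1%:M) *m \col_(i < d) i%:R = const_mx 1.
Proof.
move=> monic_p deriv1; apply/colP => i; set z := \col_(i < d) i%:R.
have -> : ((C - 1%:M) *m z) i 0 = (C *m z) i 0 - i%:R.
  by rewrite mulmxBl mul1mx !mxE.
have [lt_i1_d|] := ltnP i.+1 d.
  have := companionmx_mulmx_shift z lt_i1_d.
  by move/rowP/(_ 0); rewrite !mxE => ->; rewrite /= -addn1 natrD addrAC subrr add0r.
have d_gt0 : (0 < d)%N by apply: leq_ltn_trans (ltn_ord i).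
move=> le_d_i1; have last_i : i = d.-1 :> nat.
  by apply/eqP; rewrite eqn_leq -ltnS prednK // ltn_ord -ltnS prednK.
rewrite companionmx_mulmx_last // last_i.
under eq_bigr do rewrite mxE mulr_natr.
rewrite sum_coef_natmul_monic // deriv1 sub0r opprK.
by rewrite -{1}(prednK d_gt0) -addn1 natrD addrAC subrr add0r mxE.
Qed.

Lemma companionmx_fixed_orthogonal :
  p \is monic -> (p.[1] = 0 -> p^`().[1] = 0) -> fixed_orthogonal C.
Proof.
move=> monic_p root1_deriv w v wC Cv.
have [root1|nroot1] := eqVneq p.[1] 0.
  have [c ->] := companionmx_fixed_col Cv.
  rewrite -(companionmx_subr1_ramp monic_p (root1_deriv root1)) scalemxAr.
  by rewrite mulmxA mulmxBr wC mulmx1 subrr mul0mx.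
suff -> : w = 0 by rewrite mul0mx.
apply/eqP; apply: contraNT nroot1 => nz_w.
rewrite -/(root p 1) -[p in root p](companionmxK monic_p) -eigenvalue_root_char.
by apply/eigenvalueP; exists w; rewrite ?scale1r.
Qed.
End Companion.

Lemma fixed_orthogonal_mxdiag (F : fieldType) (N : nat) (p_ : 'I_N -> nat)
    (B_ : forall i, 'M[F]_(p_ i)) :
  (forall i, fixed_orthogonal (B_ i)) -> fixed_orthogonal (\mxdiag_i B_ i).
Proof.
move=> fixB w v wB Bv; rewrite -(submxrowK w) -(submxcolK v) in wB Bv *.
rewrite mul_mxrow_mxcol big1 // => i _; apply: fixB.
  by move: wB; rewrite mul_mxrow_mxdiag => /eq_mxrowP/(_ i).
by move: Bv; rewrite mul_mxdiag_mxcol => /eq_mxcolP/(_ i).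
Qed.

Lemma fixed_orthogonal_similar (F : fieldType) (N k : nat) (J : 'M[F]_N)
    (P : 'M[F]_(N, k)) (g : 'M[F]_k) :
  row_free P -> row_full P -> J *m P = P *m g ->
  fixed_orthogonal J -> fixed_orthogonal g.
Proof.
move=> freeP fullP JP fixJ w v wg gv.
have wP : w = (w *m pinvmx P) *m P by rewrite mulmxKpV // submx_full.
rewrite wP -mulmxA; apply: fixJ; last by rewrite mulmxA JP -mulmxA gv.
by apply: (row_free_inj freeP); rewrite -mulmxA JP mulmxA -wP.
Qed.

Lemma fixed_orthogonal_mx (F : fieldType) (k a b : nat) (g : 'M[F]_k)
    (Y : 'M[F]_(b, k)) (X : 'M[F]_(k, a)) :
  fixed_orthogonal g -> Y *m g = Y -> g *m X = X -> Y *m X = 0.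
Proof.
move=> fixg Yg gX; apply/matrixP => i j.
have /matrixP/(_ 0 0) : row i Y *m col j X = 0.
  by apply: fixg; rewrite ?colE ?mulmxA ?gX // -row_mul Yg.
rewrite !mxE => YX.
by rewrite -[RHS]YX; apply: eq_bigr => l _; rewrite !mxE.
Qed.

Lemma in_Phi_root1 (F : finFieldType) (f : {poly F}) :
  in_Phi f -> root f 1 -> f = 'X - 1.
Proof.
case=> monic_f irr_f _ root1; have : 'X - 1%:P %| f by rewrite dvdp_XsubCl.
case/(irredp_XsubCP irr_f) => [/eqp_size|]; first by rewrite size_XsubC size_poly1.
by rewrite -polyC1 eqp_monic ?monicXsubC // => /eqP.
Qed.

Lemma horner_deriv_exp_root (R : comNzRingType) (f : {poly R}) (x : R) (m : nat) :
  root f x -> (1 < m)%N -> (f ^+ m)^`().[x] = 0.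
Proof.
move=> /eqP fx0 lt1m; rewrite deriv_exp hornerMn hornerM horner_exp fx0.
by rewrite -(subnKC lt1m) expr0n mulr0 mul0rn.
Qed.

Lemma type_block_root1_deriv (F : finFieldType) (f : {poly F}) (m : nat) :
  in_Phi f -> (0 < m)%N -> (f = 'X - 1 -> (1 < m)%N) ->
  (f ^+ m).[1] = 0 -> (f ^+ m)^`().[1] = 0.
Proof.
move=> Phi_f m_gt0 unipotent_m; rewrite horner_exp => /eqP.
rewrite expf_eq0 m_gt0 /= => root1.
apply: horner_deriv_exp_root (root1) _.
exact/unipotent_m/(in_Phi_root1 Phi_f root1).
Qed.

Lemma has_type_fixed_orthogonal (F : finFieldType) (k : nat) (gbar : 'M[F]_k)
    (lam : {poly F} -> seq nat) :
  has_type gbar lam -> all (fun m => 1 < m)%N (lam ('X - 1)) ->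
  fixed_orthogonal gbar.
Proof.
case=> Phi_lam part_lam [s [_ _ [P [freeP fullP blocksP]]]] unipotent_lam.
apply: (fixed_orthogonal_similar freeP fullP blocksP).
apply: fixed_orthogonal_mxdiag => i.
have := mem_nth 0 (ltn_ord i).
case/flattenP => _ /mapP [f _ ->] /mapP [m lam_f_m ->].
have Phi_f : in_Phi f by apply: Phi_lam; apply: contraTneq lam_f_m => ->.
apply: companionmx_fixed_orthogonal.
  by case: Phi_f => monic_f _ _; apply: monic_exp.
apply: type_block_root1_deriv Phi_f _ _.
  by move/andP: (part_lam f) => [_ /allP]; apply.
by move=> Xsub1_f; apply: (allP unipotent_lam); rewrite -Xsub1_f.
Qed.

Lemma comm_mx_invmx (R : comUnitRingType) (n : nat) (A g : 'M[R]_n) :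
  A \in unitmx -> comm_mx A g -> comm_mx (invmx A) g.
Proof.
move=> unitA Ag; rewrite /comm_mx -[LHS]mulmx1 -(mulmxV unitA) !mulmxA.
by rewrite -(mulmxA _ g) -Ag mulmxA mulVmx // mul1mx.
Qed.

Lemma comm_block_diag1 (R : pzRingType) (k l : nat) (g A : 'M[R]_k)
    (B : 'M[R]_(k, l)) (C : 'M[R]_(l, k)) (D : 'M[R]_l) :
  comm_mx (block_mx A B C D) (block_mx g 0 0 1%:M) ->
  [/\ comm_mx A g, g *m B = B & C *m g = C].
Proof.
rewrite /comm_mx !mulmx_block => /eq_block_mx [AgA BB CC _].
move: AgA BB CC; rewrite !mulmx0 !mul0mx !addr0 !add0r mulmx1 mul1mx.
by move=> -> <- ->.
Qed.

Lemma unitmx_block_offdiag0 (R : comUnitRingType) (k l : nat) (A A' : 'M[R]_k)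
    (B B' : 'M[R]_(k, l)) (C C' : 'M[R]_(l, k)) (D D' : 'M[R]_l) :
  block_mx A B C D *m block_mx A' B' C' D' = 1%:M ->
  C *m B' = 0 -> C' *m B = 0 -> (A \in unitmx) && (D \in unitmx).
Proof.
rewrite mulmx_block (scalar_mx_block k l) => /eq_block_mx [AA' _ _ DD'] CB' C'B.
apply/andP; split; last by move: DD'; rewrite CB' add0r => /mulmx1_unit [].
suff /mulmx1_unit [] : A *m (A' *m (1%:M + B *m C')) = 1%:M by [].
rewrite mulmxA (_ : A *m A' = 1%:M - B *m C'); last by rewrite -AA' addrK.
rewrite mulmxBl mul1mx mulmxDr mulmx1 -!mulmxA (mulmxA C') C'B.
by rewrite mul0mx mulmx0 addr0 addrK.
Qed.

Lemma unitmx_block_schur0 (R : comUnitRingType) (k l : nat) (A : 'M[R]_k)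
    (B : 'M[R]_(k, l)) (C : 'M[R]_(l, k)) (D : 'M[R]_l) :
  A \in unitmx -> D \in unitmx -> C *m invmx A *m B = 0 ->
  block_mx A B C D \in unitmx.
Proof.
move=> unitA unitD CAB.
have : block_mx A B C D *m block_mx 1%:M (- invmx A *m B) 0 1%:M = block_mx A 0 C D.
  rewrite mulmx_block !mulmx0 !addr0 !mulmx1 mulNmx !mulmxN !mulmxA CAB oppr0 add0r.
  by rewrite mulmxV // mul1mx addNr.
move/(congr1 determinant); rewrite det_mulmx det_ublock !det1 !mulr1 det_lblock.
by rewrite unitmxE => ->; rewrite unitrM -!unitmxE unitA unitD.
Qed.

Lemma unitmx_comm_block_diag1 (F : fieldType) (k l : nat) (g A : 'M[F]_k)
    (B : 'M[F]_(k, l)) (C : 'M[F]_(l, k)) (D : 'M[F]_l) :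
  fixed_orthogonal g -> comm_mx (block_mx A B C D) (block_mx g 0 0 1%:M) ->
  (block_mx A B C D \in unitmx) = (A \in unitmx) && (D \in unitmx).
Proof.
move=> fixg commM; have [Ag gB Cg] := comm_block_diag1 commM.
apply/idP/andP => [unitM | [unitA unitD]].
  set N := invmx (block_mx A B C D).
  have := comm_mx_invmx unitM commM; rewrite -/N -[N]submxK.
  case/comm_block_diag1 => _ gB' C'g; apply/andP.
  apply: (@unitmx_block_offdiag0 _ _ _ A (ulsubmx N) B (ursubmx N)
                                  C (dlsubmx N) D (drsubmx N)).
  - by rewrite submxK mulmxV.
  - exact: fixed_orthogonal_mx fixg Cg gB'.
  - exact: fixed_orthogonal_mx fixg C'g gB.
apply: unitmx_block_schur0 => //; rewrite -mulmxA.
apply: fixed_orthogonal_mx fixg Cg _.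
by rewrite mulmxA -(comm_mx_invmx unitA Ag) -mulmxA gB.
Qed.

Unset Implicit Arguments.

Theorem corollary2p7 (F : finFieldType) (k n : nat) (Hkn : (k <= n)%N)
  (gbar : 'M[F]_k) (lam : {poly F} -> seq nat) :
  gbar \in unitmx ->
  has_type gbar lam ->
  all (fun m => 1 < m)%N (lam ('X - 1)) ->
  forall (A : 'M[F]_k) (B : 'M[F]_(k, n - k)) (C : 'M[F]_(n - k, k))
         (D : 'M[F]_(n - k)),
    let g := block_mx gbar 0 0 (1%:M : 'M[F]_(n - k)) in
    let M := block_mx A B C D in
    M *m g = g *m M ->
    (M \in unitmx <-> (A \in unitmx) /\ (D \in unitmx)).
Proof.
move=> _ type_gbar unipotent A B C D g M commM.
have fixg := has_type_fixed_orthogonal type_gbar unipotent.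
by rewrite (unitmx_comm_block_diag1 fixg commM); split=> /andP.
Qed.
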